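(* Let $\mathbf{p}$ be a piece-wise order reversing pair on a finite alphabet $\mathcal{A}$ whose order reversing blocks consist of exactly $N_1$ $1$-blocks, $N_2$ $2$-blocks, $N_4$ $4$-blocks and $N_5$ $5$-blocks (and no blocks of other sizes). Then $$\mathrm{ARF}(\mathbf{p})=2^{N_1+2N_2+4N_4+5N_5+1}+(-1)^{N_4+N_5}\,2^{N_1+N_2+2N_4+3N_5}.$$
   Context: Let $n=\#\mathcal{A}\ge2$. A pair is $\mathbf{p}=(p_0,p_1)$ with $p_0,p_1:\mathcal{A}\to\{1,\dots,n\}$ bijections. Standard: $p_0^{-1}(1)=p_1^{-1}(n)$ and $p_1^{-1}(1)=p_0^{-1}(n)$. A standard pair is piece-wise order reversing if there are $2=k_0<\dots<k_\ell=n$ with $B_i=p_0^{-1}\{k_{i-1},\dots,k_i-1\}=p_1^{-1}\{k_{i-1},\dots,k_i-1\}$ and $p_0(b)+p_1(b)=k_{i-1}+k_i-1$ for $b\in B_i$; the $B_i$ are the order reversing blocks, and a block with $k$ letters is a $k$-block. Quadratic form: $\mathcal{Q}_{\mathbf{p}}(v)=\sum_{a\in\mathcal{A}}v_a^2+\sum_{\{a,b\}}L_{\mathbf{p}}(a,b)v_av_b\pmod 2$ for $v\in\mathbb{Z}_2^{\mathcal{A}}$, the second sum over unordered pairs of distinct letters, where $L_{\mathbf{p}}(a,b)=1$ if $(p_0(a)-p_0(b))(p_1(a)-p_1(b))<0$ and $0$ otherwise. $\mathrm{ARF}(\mathbf{p})=\#\{v\in\mathbb{Z}_2^{\mathcal{A}}:\mathcal{Q}_{\mathbf{p}}(v)=1\}$.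 *)

From mathcomp Require Import all_boot all_order all_algebra.
Set Implicit Arguments. Unset Strict Implicit. Unset Printing Implicit Defensive.
Import Order.TTheory GRing.Theory Num.Theory.

Definition is_bij_1n (A : finType) (p : A -> nat) : Prop :=
  injective p /\ (forall a, 1 <= p a <= #|A|)%N.

Definition is_pair (A : finType) (p0 p1 : A -> nat) : Prop :=
  is_bij_1n p0 /\ is_bij_1n p1.

Definition is_standard (A : finType) (p0 p1 : A -> nat) : Prop :=
  (forall a, (p0 a == 1%N) = (p1 a == #|A|)) /\
  (forall a, (p1 a == 1%N) = (p0 a == #|A|)).

Definition por_block (A : finType) (p0 p1 : A -> nat) (lo hi : nat) : Prop :=
  (forall b, (lo <= p0 b < hi)%N = (lo <= p1 b < hi)%N) /\
  (forall b, (lo <= p0 b < hi)%N -> (p0 b + p1 b = lo + hi - 1)%N).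

Definition por_witness (A : finType) (p0 p1 : A -> nat) (ks : seq nat) : Prop :=
  head 0%N ks = 2%N /\ last 0%N ks = #|A| /\ sorted ltn ks /\
  (forall i, (i.+1 < size ks)%N -> por_block p0 p1 (nth 0%N ks i) (nth 0%N ks i.+1)).

Definition block_sizes (ks : seq nat) : seq nat :=
  [seq (nth 0%N ks i.+1 - nth 0%N ks i)%N | i <- iota 0 (size ks).-1].

Definition Lp (A : finType) (p0 p1 : A -> nat) (a b : A) : nat :=
  if (((p0 a)%:Z - (p0 b)%:Z) * ((p1 a)%:Z - (p1 b)%:Z) < 0)%R then 1%N else 0%N.

(* Q_p(v) in Z_2, with v in Z_2^A represented by boolean vectors;
   unordered pairs {a,b} are enumerated once via enum_rank a < enum_rank b. *)
Definition Qp (A : finType) (p0 p1 : A -> nat) (v : {ffun A -> bool}) : nat :=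
  ((\sum_(a : A) (nat_of_bool (v a)) ^ 2 +
    \sum_(a : A) \sum_(b : A | (enum_rank a < enum_rank b)%N)
        Lp p0 p1 a b * v a * v b) %% 2)%N.

Definition ARF (A : finType) (p0 p1 : A -> nat) : nat :=
  #|[set v : {ffun A -> bool} | Qp p0 p1 v == 1%N]|.

From mathcomp Require Import all_boot all_order all_algebra zify ring.
Import Order.TTheory GRing.Theory Num.Theory.
Set Implicit Arguments. Unset Strict Implicit. Unset Printing Implicit Defensive.

(* List the letters in the order given by p0. Then p1 reads n, then each
   block reversed, then 1, and Q_p(v) is the number of marked letters plus the
   number of marked p1-inversions, modulo 2. Hence
   2 ARF = 2^n - sum_v (-1)^{Q_p(v)}. Summing over the two end letters leaves
   the factor -2, and the remaining sum factors over the blocks, a k-block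
   contributing sum_{t in {0,1}^k} (-1)^{binom(|t|,2)}, which is 2, 2, -4, -8
   for k = 1, 2, 4, 5. *)

Fixpoint bitseqs (k : nat) : seq (seq bool) :=
  if k is k'.+1 then [seq true :: t | t <- bitseqs k'] ++ [seq false :: t | t <- bitseqs k']
  else [:: [::]].

Lemma mem_bitseqs k t : (t \in bitseqs k) = (size t == k).
Proof.
elim: k t => [|k IH] [|b t] //=.
- by case: k {IH}=> [|k]; rewrite mem_cat; apply/negP; case/orP=> /mapP [].
- have inj (b' : bool) : injective (cons b') by move=> x y [].
  have nin b' L : (b' :: t \in map (cons (~~ b')) L) = false.
    by apply/negP => /mapP [? _ []]; case: b'.
  rewrite mem_cat eqSS -IH; case: b.
  + by rewrite (mem_map (inj true)) (nin true) orbF.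
  + by rewrite (mem_map (inj false)) (nin false).
Qed.

Lemma uniq_bitseqs k : uniq (bitseqs k).
Proof.
elim: k => [|k IH] //=.
rewrite cat_uniq !map_inj_uniq //; try by move=> x y [].
rewrite IH /= andbT; apply/hasPn => t /mapP [t' _ ->].
by apply/negP => /mapP [? _ []].
Qed.

Lemma big_bitseqs_cat (R : Type) (idx : R) (op : Monoid.com_law idx) k1 k2
    (F : seq bool -> R) :
  \big[op/idx]_(w <- bitseqs (k1 + k2)) F w =
  \big[op/idx]_(t <- bitseqs k1) \big[op/idx]_(u <- bitseqs k2) F (t ++ u).
Proof.
elim: k1 F => [|k1 IH] F; first by rewrite add0n big_cons big_nil Monoid.mulm1.
rewrite addSn /= !big_cat !big_map /=.
by rewrite (IH (fun w => F (true :: w))) (IH (fun w => F (false :: w))).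
Qed.

Lemma big_ffun_bitseqs (R : Type) (idx : R) (op : Monoid.com_law idx)
    (A : finType) (ord : seq A) (F : seq bool -> R) :
  uniq ord -> (forall a, a \in ord) ->
  \big[op/idx]_(v : {ffun A -> bool}) F (map v ord) =
  \big[op/idx]_(w <- bitseqs (size ord)) F w.
Proof.
move=> ord_uniq ord_full.
rewrite -(big_map (fun v : {ffun A -> bool} => map v ord) xpredT F).
apply: perm_big; apply: uniq_perm; rewrite ?uniq_bitseqs //.
  rewrite map_inj_uniq ?index_enum_uniq // => v1 v2 /eq_in_map h.
  by apply/ffunP => a; apply: h.
move=> w; rewrite mem_bitseqs; apply/idP/idP.
  by case/mapP => v _ ->; rewrite size_map.
move=> /eqP hw; apply/mapP; exists [ffun a => nth false w (index a ord)].
  by rewrite mem_index_enum.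
apply: (@eq_from_nth _ false); first by rewrite size_map hw.
move=> i hi; rewrite hw in hi.
have x0 : A by case: (ord) hi => [|x s] // _; exact: x.
by rewrite (nth_map x0) // ffunE index_uniq.
Qed.

Fixpoint marked_inversions (s : seq (bool * nat)) : nat :=
  if s is e :: s' then e.1 * count (fun f => f.1 && (f.2 < e.2)) s' + marked_inversions s'
  else 0.

Lemma count_marked_zip (P : pred nat) (t : seq bool) (q : seq nat) :
  size t = size q -> all P q -> count (fun f => f.1 && P f.2) (zip t q) = count id t.
Proof.
elim: t q => [|b t IH] [|c q] //= [hs] /andP [hc hq].
by rewrite hc andbT IH.
Qed.

Lemma all_zip_snd (P : pred nat) (t : seq bool) q :
  all P q -> all (fun e => P e.2) (zip t q).
Proof. by elim: t q => [|b t IH] [|c q] //= /andP [-> /IH ->]. Qed.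

Lemma marked_inversions_rcons s p :
  marked_inversions (rcons s p) =
  marked_inversions s + count (fun e => e.1 && (p.1 && (p.2 < e.2))) s.
Proof.
elim: s => [|[b c] s IH] /=; first by rewrite muln0.
rewrite -cats1 count_cat /= cats1 IH.
by case: b => /=; case: (p.1 && (p.2 < c)) => /=; lia.
Qed.

Lemma marked_inversions_cat (b : nat) s1 s2 :
  all (fun e => e.2 < b) s1 -> all (fun f => b <= f.2) s2 ->
  marked_inversions (s1 ++ s2) = marked_inversions s1 + marked_inversions s2.
Proof.
elim: s1 => [|e s1 IH] //= /andP [he h1] h2.
rewrite IH // count_cat.
rewrite (@eq_in_count _ _ pred0 s2); first by rewrite count_pred0 addn0 addnA.
move=> f hf /=; move/allP: h2 => /(_ f hf) h2.
by apply/negbTE; rewrite negb_and -leqNgt (leq_trans (ltnW he) h2) orbT.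
Qed.

Lemma marked_inversions_decreasing (q : seq nat) (t : seq bool) :
  sorted (fun x y => y < x) q -> size t = size q ->
  marked_inversions (zip t q) = 'C(count id t, 2).
Proof.
elim: q t => [|c q IH] [|b t] //= hp [hs].
have hall : all (fun x => x < c) q.
  by apply: (order_path_min _ hp) => x y z h1 h2; apply: ltn_trans h1.
rewrite (count_marked_zip (P := fun x => x < c) hs hall) IH //; last exact: path_sorted hp.
case: b => /=; last by rewrite mul0n.
by rewrite add1n binS bin1 mul1n addnC.
Qed.

Lemma path_ltn_le_last a ks : path ltn a ks -> a <= last a ks.
Proof.
elim: ks a => [|b ks IH] a //= /andP [hab hp].
exact: leq_trans (ltnW hab) (IH b hp).
Qed.

Lemma block_sizes_cons a b ks :
  block_sizes [:: a, b & ks] = (b - a) :: block_sizes (b :: ks).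
Proof.
rewrite /block_sizes /= -[1]/(1 + 0) iotaDl -map_comp.
by congr (_ :: _); apply: eq_map => i /=; rewrite add1n.
Qed.

Lemma sumn_block_sizes ks : sorted ltn ks -> sumn (block_sizes ks) = last 0 ks - head 0 ks.
Proof.
elim: ks => [|a ks IH] //; case: ks IH => [|b ks] IH; first by rewrite /= subnn.
rewrite block_sizes_cons /= => /andP [hab hp]; rewrite IH //=.
have := path_ltn_le_last hp; lia.
Qed.

(* The values of p1 at the letters with p0-values k_0, ..., k_l - 1 when every
   [k_{i-1}, k_i) is an order reversing block. *)
Fixpoint reversed_blocks (ks : seq nat) : seq nat :=
  match ks with
  | a :: ((b :: _) as ks') => rev (iota a (b - a)) ++ reversed_blocks ks'
  | _ => [::]
  end.

Lemma size_reversed_blocks ks :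
  sorted ltn ks -> size (reversed_blocks ks) = last 0 ks - head 0 ks.
Proof.
elim: ks => [|a ks IH] //; case: ks IH => [|b ks] IH /=; first by rewrite subnn.
move=> /andP [hab hp]; rewrite size_cat size_rev size_iota IH //=.
have := path_ltn_le_last hp; lia.
Qed.

Lemma reversed_blocks_bounds ks : sorted ltn ks ->
  all (fun c => head 0 ks <= c < last 0 ks) (reversed_blocks ks).
Proof.
elim: ks => [|a ks IH] //; case: ks IH => [|b ks] IH //=.
move=> /andP [hab hp]; have hl := path_ltn_le_last hp.
rewrite all_cat all_rev; apply/andP; split.
  by apply/allP => c; rewrite mem_iota => /andP [h1 h2]; apply/andP; split => //; lia.
by apply: sub_all (IH hp) => c /= /andP [h1 h2]; apply/andP; split => //; lia.
Qed.

Lemma nth_reversed_blocks ks p : sorted ltn ks -> head 0 ks <= p < last 0 ks ->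
  exists j, [/\ j.+1 < size ks, nth 0 ks j <= p < nth 0 ks j.+1 &
     nth 0 (reversed_blocks ks) (p - head 0 ks) = nth 0 ks j + nth 0 ks j.+1 - 1 - p].
Proof.
elim: ks p => [|a ks IH] p //; case: ks IH => [|b ks] IH /=; first by lia.
move=> /andP [hab hp] /andP [hap hpl].
case: (ltnP p b) => hpb.
  exists 0; split => //=; first by rewrite hap.
  rewrite nth_cat size_rev size_iota ifT; last by lia.
  by rewrite nth_rev size_iota ?nth_iota; lia.
have [j [hj1 hj2 hj3]] := IH p hp (ltac:(rewrite /=; lia)).
exists j.+1; split => //=.
rewrite nth_cat size_rev size_iota ifF; last by lia.
by rewrite -hj3 /=; congr nth; lia.
Qed.

Definition block_sign_sum (k : nat) : int :=
  (\sum_(t <- bitseqs k) (-1) ^+ 'C(count id t, 2))%R.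

Lemma block_sign_sum1 : block_sign_sum 1 = (2)%R.
Proof. by rewrite /block_sign_sum unlock; vm_compute. Qed.
Lemma block_sign_sum2 : block_sign_sum 2 = (2)%R.
Proof. by rewrite /block_sign_sum unlock; vm_compute. Qed.
Lemma block_sign_sum4 : block_sign_sum 4 = (- 4)%R.
Proof. by rewrite /block_sign_sum unlock; vm_compute. Qed.
Lemma block_sign_sum5 : block_sign_sum 5 = (- 8)%R.
Proof. by rewrite /block_sign_sum unlock; vm_compute. Qed.

(* Letters of different blocks never form an inversion, and inside a block
   every marked pair does. *)
Lemma sign_sum_reversed_blocks ks : sorted ltn ks ->
  (\sum_(u <- bitseqs (last 0 ks - head 0 ks))
     (-1) ^+ marked_inversions (zip u (reversed_blocks ks))
   = \prod_(k <- block_sizes ks) block_sign_sum k)%R.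
Proof.
elim: ks => [|a ks IH]; first by rewrite /= big_cons !big_nil addr0 expr0.
case: ks IH => [|b ks] IH; first by rewrite /= subnn big_cons !big_nil addr0 expr0.
rewrite block_sizes_cons big_cons /= => /andP [hab hp].
have hl := path_ltn_le_last hp.
have -> : last b ks - a = (b - a) + (last 0 (b :: ks) - head 0 (b :: ks)) by rewrite /=; lia.
rewrite big_bitseqs_cat -(IH hp) /block_sign_sum big_distrl /=.
rewrite big_seq [RHS]big_seq; apply: eq_bigr => t ht.
rewrite big_distrr /= big_seq [RHS]big_seq; apply: eq_bigr => u hu.
move: ht hu; rewrite !mem_bitseqs => /eqP ht /eqP hu.
rewrite zip_cat; last by rewrite size_rev size_iota.
rewrite (@marked_inversions_cat b); first last.
- have := @reversed_blocks_bounds (b :: ks) hp; rewrite /= => hq.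
  by apply: (@all_zip_snd (fun c => b <= c)); apply: sub_all hq => c /andP [].
- by apply: (@all_zip_snd (fun c => c < b)); apply/allP => c; rewrite mem_rev mem_iota; lia.
rewrite exprD marked_inversions_decreasing //; last by rewrite size_rev size_iota.
by rewrite rev_sorted; apply: iota_ltn_sorted.
Qed.

Lemma prod_block_sign_sum_1245 bs : all (fun k => k \in [:: 1; 2; 4; 5]) bs ->
  (\prod_(k <- bs) block_sign_sum k = (-1) ^+ (count_mem 4 bs + count_mem 5 bs) *
     2 ^+ (count_mem 1 bs + count_mem 2 bs + 2 * count_mem 4 bs + 3 * count_mem 5 bs))%R.
Proof.
elim: bs => [|k bs IH]; first by rewrite big_nil.
rewrite /= => /andP [hk /IH IH1]; rewrite big_cons IH1.
move: hk; rewrite !inE => /or4P [] /eqP ->; do ! rewrite [_ == _]/=;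
  rewrite ?block_sign_sum1 ?block_sign_sum2 ?block_sign_sum4 ?block_sign_sum5;
  rewrite ?add0n ?add1n ?mulnS ?addnS ?addSn !exprS; ring.
Qed.

Lemma sumn_1245 bs : all (fun k => k \in [:: 1; 2; 4; 5]) bs ->
  sumn bs = count_mem 1 bs + 2 * count_mem 2 bs + 4 * count_mem 4 bs + 5 * count_mem 5 bs.
Proof.
elim: bs => [|k bs IH] //= /andP [hk /IH ->].
by move: hk; rewrite !inE => /or4P [] /eqP ->; rewrite /=; lia.
Qed.

Lemma marked_inversions_ends (n : nat) (qm : seq nat) (u : seq bool) (x y : bool) :
  1 < n -> size u = size qm -> all (fun c => 2 <= c < n) qm ->
  count id (x :: u ++ [:: y]) + marked_inversions (zip (x :: u ++ [:: y]) (n :: qm ++ [:: 1]))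
  = x + (count id u + y) + (x * (count id u + y) + (marked_inversions (zip u qm) + y * count id u)).
Proof.
move=> n_gt1 hs ha.
have hlt : all (fun c => c < n) qm by apply: sub_all ha => c /andP [].
have hgt : all (fun c => 1 < c) qm by apply: sub_all ha => c /andP [].
rewrite /= count_cat /= addn0; congr (_ + _).
rewrite zip_cat // cats1 marked_inversions_rcons -cats1 count_cat /=.
rewrite (count_marked_zip (P := fun c => c < n) hs hlt).
case: y; rewrite /= ?n_gt1 /=.
- by rewrite (count_marked_zip (P := fun c => 1 < c) hs hgt) addn0 mul1n.
- rewrite (@eq_count _ (fun e : bool * nat => e.1 && false) pred0) => [|e];
    last by rewrite /= andbF.
  by rewrite count_pred0 /=; lia.
Qed.

(* Summing over the marks x, y of the two end letters gives the factor
   (-1)^s + (-1) + (-1) + (-(-1)^s) = -2, where s is the number of marks in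
   between. *)
Lemma sign_sum_standard ks n : sorted ltn ks -> head 0 ks = 2 -> last 0 ks = n ->
  (\sum_(w <- bitseqs n)
      (-1) ^+ (count id w + marked_inversions (zip w (n :: reversed_blocks ks ++ [:: 1])))
    = - 2 * \prod_(k <- block_sizes ks) block_sign_sum k)%R.
Proof.
move=> hs hh hl.
have n_ge2 : 2 <= n.
  by case: ks hs hh hl => [|a ks'] //= hs <- <-; apply: path_ltn_le_last.
rewrite -sign_sum_reversed_blocks // hh hl.
have hb := reversed_blocks_bounds hs; rewrite hh hl in hb.
have hsz := size_reversed_blocks hs; rewrite hh hl in hsz.
rewrite (_ : bitseqs n = bitseqs (1 + ((n - 2) + 1))); last by congr bitseqs; lia.
rewrite big_bitseqs_cat; under eq_bigr do rewrite big_bitseqs_cat.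
rewrite exchange_big big_distrr big_seq [RHS]big_seq; apply: eq_bigr => u.
rewrite mem_bitseqs => /eqP hu.
rewrite [bitseqs 1]/= !big_cons !big_nil !Monoid.mulm1; cbv beta.
rewrite !marked_inversions_ends //; try by rewrite hu hsz.
rewrite /= ?mul1n ?mul0n ?add0n ?addn0 !exprD -(signr_odd _ (count id u)).
by case: (odd _); rewrite /= ?expr0 ?expr1; ring.
Qed.

Lemma sum_lt_pairs_inj (A : finType) (k1 k2 : A -> nat) (g : A -> A -> nat) :
  (forall a b, g a b = g b a) -> injective k1 -> injective k2 ->
  \sum_a \sum_(b | k1 a < k1 b) g a b = \sum_a \sum_(b | k2 a < k2 b) g a b.
Proof.
move=> g_sym.
suff double_sum k : injective k ->
    (\sum_a \sum_(b | k a < k b) g a b).*2 = \sum_a \sum_b (if a != b then g a b else 0).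
  by move=> k1_inj k2_inj; apply: double_inj; rewrite !double_sum.
move=> k_inj; pose F a b := if k a < k b then g a b else 0.
rewrite (eq_bigr (fun a => \sum_b F a b)) => [|a _]; last by rewrite big_mkcond.
rewrite -addnn [X in _ + X]exchange_big /=.
rewrite [RHS](eq_bigr (fun a => \sum_b F a b + \sum_b F b a)) ?big_split // => a _.
rewrite (eq_bigr (fun b => F a b + F b a)) ?big_split // => b _.
rewrite /F (g_sym b a); case: (eqVneq a b) => [->|hab]; first by rewrite ltnn.
have hk : k a != k b by apply: contra hab => /eqP /k_inj ->.
by case: ltngtP hk => //= _ _; rewrite addn0.
Qed.

Lemma sum_lt_pairs_sorted (A : eqType) (k c : A -> nat) (v : A -> bool) (s : seq A) :
  sorted (relpre k ltn) s ->
  \sum_(a <- s) \sum_(b <- s | k a < k b) ((c b < c a) * v a * v b)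
    = marked_inversions [seq (v a, c a) | a <- s].
Proof.
elim: s => [|a s IH] /=; first by rewrite big_nil.
move=> hp; have /allP hall : all (relpre k ltn a) s.
  by apply: order_path_min hp => x y z /= h1 h2; apply: ltn_trans h2.
rewrite big_cons big_cons ltnn -IH ?(path_sorted hp) //; congr (_ + _).
  rewrite big_seq_cond (eq_bigl (fun b => b \in s)); last first.
    by move=> b; apply/andb_idr => /hall.
  rewrite -big_seq count_map -sum1_count big_distrr [RHS]big_mkcond /=.
  by apply: eq_bigr => b _; case: (v a); case: (v b); case: (c b < c a).
rewrite big_seq [RHS]big_seq; apply: eq_bigr => a' ha'.
by rewrite big_cons ifF //; apply/negbTE; rewrite -leqNgt; exact: ltnW (hall a' ha').
Qed.

Section QuadraticForm.

Variables (A : finType) (p0 p1 : A -> nat).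

Lemma Lp_sym a b : Lp p0 p1 a b = Lp p0 p1 b a.
Proof. by rewrite /Lp -[((p0 b)%:Z - _)%R]opprB -[((p1 b)%:Z - _)%R]opprB mulrNN. Qed.

Lemma Lp_ltE a b : p0 a < p0 b -> Lp p0 p1 a b = (p1 b < p1 a).
Proof.
move=> h; rewrite /Lp nmulr_rlt0 ?subr_lt0 ?ltz_nat // subr_gt0 ltz_nat.
by case: (p1 b < p1 a).
Qed.

Lemma ARF_sign_sum :
  ((ARF p0 p1)%:Z * 2 = 2 ^+ #|A| - \sum_(v : {ffun A -> bool}) (-1) ^+ Qp p0 p1 v)%R.
Proof.
have -> : (2 ^+ #|A| = \sum_(v : {ffun A -> bool}) (1 : int))%R.
  by rewrite sumr_const card_ffun card_bool -natrX.
rewrite /ARF -sum1_card -natz natr_sum mulr_suml big_mkcond -sumrB.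
apply: eq_bigr => v _; rewrite in_set.
have : Qp p0 p1 v < 2 by rewrite /Qp ltn_pmod.
by case: (Qp p0 p1 v) => [|[|k]].
Qed.

Definition p0_order : seq A := sort (relpre p0 leq) (enum A).

Lemma perm_p0_order : perm_eq p0_order (enum A).
Proof. by rewrite perm_sort. Qed.

Lemma uniq_p0_order : uniq p0_order.
Proof. by rewrite (perm_uniq perm_p0_order) enum_uniq. Qed.

Lemma mem_p0_order a : a \in p0_order.
Proof. by rewrite (perm_mem perm_p0_order) mem_enum. Qed.

Lemma size_p0_order : size p0_order = #|A|.
Proof. by rewrite (perm_size perm_p0_order) cardE. Qed.

Hypothesis p0_bij : is_bij_1n p0.

Lemma map_p0_order : map p0 p0_order = iota 1 #|A|.
Proof.
have [p0_inj p0_range] := p0_bij.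
apply: (irr_sorted_eq ltn_trans ltnn).
- rewrite ltn_sorted_uniq_leq map_inj_uniq // uniq_p0_order /= sorted_map.
  by apply: sort_sorted => a b; apply: leq_total.
- exact: iota_ltn_sorted.
- apply: (uniq_min_size (s1 := map p0 p0_order) (s2 := iota 1 #|A|) _ _ _).2.
  + by rewrite map_inj_uniq // uniq_p0_order.
  + by move=> x /mapP [a _ ->]; rewrite mem_iota; have := p0_range a; lia.
  + by rewrite size_iota size_map size_p0_order.
Qed.

Lemma Qp_p0_order v :
  Qp p0 p1 v = (count id (map v p0_order)
               + marked_inversions (zip (map v p0_order) (map p1 p0_order))) %% 2.
Proof.
have p0_inj := p0_bij.1.
have ord_perm : perm_eq (index_enum A) p0_order.
  apply: uniq_perm; rewrite ?index_enum_uniq ?uniq_p0_order // => a.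
  by rewrite mem_index_enum mem_p0_order.
have ord_sorted : sorted (relpre p0 ltn) p0_order.
  by rewrite -sorted_map map_p0_order iota_ltn_sorted.
rewrite /Qp; congr (_ %% 2); congr (_ + _).
  rewrite (eq_bigr (fun a => nat_of_bool (v a))) => [|a _]; last by case: (v a).
  by rewrite (perm_big _ ord_perm) -sumn_count sumnE !big_map.
rewrite (@sum_lt_pairs_inj _ _ p0); first last.
- exact: p0_inj.
- by move=> x y /ord_inj /enum_rank_inj.
- by move=> a b; rewrite Lp_sym mulnAC.
rewrite zip_map -(sum_lt_pairs_sorted p1 v ord_sorted) (perm_big _ ord_perm).
apply: eq_bigr => a _; rewrite (perm_big _ ord_perm).
by apply: eq_bigr => b hab; rewrite Lp_ltE.
Qed.

Lemma map_p1_p0_order ks : is_standard p0 p1 -> por_witness p0 p1 ks ->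
  map p1 p0_order = #|A| :: reversed_blocks ks ++ [:: 1].
Proof.
move=> [first_last last_first] [ks_head [ks_last [ks_sorted ks_blocks]]].
(* [#|A|] occurs here in two convertible but syntactically different forms,
   which lia would treat as distinct atoms; [set] identifies them. *)
set n := #|A| in first_last last_first ks_last *.
have size_ord : size p0_order = n := size_p0_order.
have n_ge2 : 1 < n.
  by move: ks_sorted ks_head; rewrite -ks_last; case: (ks) => [|a ks'] //= hs <-;
    apply: path_ltn_le_last.
have size_mid := size_reversed_blocks ks_sorted; rewrite ks_head ks_last in size_mid.
have /card_gt0P [a0 _] : 0 < n by lia.
have p0_nth i : i < n -> p0 (nth a0 p0_order i) = i.+1.
  by move=> hi; rewrite -(nth_map a0 0) ?size_ord // map_p0_order nth_iota // add1n.
apply: (@eq_from_nth _ 0); first by rewrite size_map size_ord /= size_cat size_mid /=; lia.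
move=> i; rewrite size_map size_ord => hi; rewrite (nth_map a0) ?size_ord //.
have p0_b := p0_nth i hi.
have [i0|i_gt0] := posnP i; first by subst i; apply/eqP; rewrite /= -first_last p0_b.
have [i_last|i_mid] := eqVneq i n.-1.
  rewrite [in RHS](_ : i = (n - 2).+1) /=; last by lia.
  rewrite nth_cat size_mid ltnn subnn /=.
  by apply/eqP; rewrite last_first p0_b; apply/eqP; lia.
rewrite [in RHS](_ : i = i.-1.+1) /=; last by lia.
rewrite nth_cat size_mid ifT; last by lia.
have [j [j_lt j_block]] :=
  nth_reversed_blocks (p := i.+1) ks_sorted (ltac:(rewrite ks_head ks_last; lia)).
rewrite ks_head (_ : i.+1 - 2 = i.-1) => [->|]; last by lia.
have [_ block_sum] := ks_blocks j j_lt.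
by move: (block_sum (nth a0 p0_order i) (ltac:(by rewrite p0_b))); rewrite p0_b; lia.
Qed.

Lemma sign_sum_Qp ks : is_standard p0 p1 -> por_witness p0 p1 ks ->
  (\sum_(v : {ffun A -> bool}) (-1) ^+ Qp p0 p1 v
   = - 2 * \prod_(k <- block_sizes ks) block_sign_sum k)%R.
Proof.
move=> st wit; have [ks_head [ks_last [ks_sorted _]]] := wit.
pose F w : int :=
  ((-1) ^+ (count id w + marked_inversions (zip w (#|A| :: reversed_blocks ks ++ [:: 1]))))%R.
rewrite (eq_bigr (fun v : {ffun A -> bool} => F (map v p0_order))) => [|v _]; last first.
  by rewrite Qp_p0_order modn2 signr_odd (map_p1_p0_order st wit).
rewrite big_ffun_bitseqs ?size_p0_order; first exact: sign_sum_standard.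
- exact: uniq_p0_order.
- exact: mem_p0_order.
Qed.

End QuadraticForm.

Theorem lemma4p9 (A : finType) (p0 p1 : A -> nat) (ks : seq nat)
    (N1 N2 N4 N5 : nat) :
  (2 <= #|A|)%N ->
  is_pair p0 p1 ->
  is_standard p0 p1 ->
  por_witness p0 p1 ks ->
  all (fun k => k \in [:: 1; 2; 4; 5]%N) (block_sizes ks) ->
  count_mem 1%N (block_sizes ks) = N1 ->
  count_mem 2%N (block_sizes ks) = N2 ->
  count_mem 4%N (block_sizes ks) = N4 ->
  count_mem 5%N (block_sizes ks) = N5 ->
  (((ARF p0 p1)%:Z : int) =
     2 ^+ (N1 + 2 * N2 + 4 * N4 + 5 * N5 + 1)%N
     + (-1) ^+ (N4 + N5)%N * 2 ^+ (N1 + N2 + 2 * N4 + 3 * N5)%N    )%R.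
Proof.
move=> n_ge2 [p0_bij _] st wit sizes_1245 N1E N2E N4E N5E.
have [ks_head [ks_last [ks_sorted _]]] := wit.
have card_A : #|A| = (N1 + 2 * N2 + 4 * N4 + 5 * N5 + 1).+1.
  have := sumn_block_sizes ks_sorted.
  by rewrite sumn_1245 // N1E N2E N4E N5E ks_head -ks_last in n_ge2 *; lia.
apply: (@mulIf _ 2) => //.
rewrite ARF_sign_sum (sign_sum_Qp p0_bij st wit) prod_block_sign_sum_1245 //.
by rewrite N1E N2E N4E N5E card_A exprS; ring.
Qed.
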